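(* For a restless bandit as in the context, every stationary policy $u$, every $S\subseteq N^{\{0,1\}}$ and every initial state $i\in N$, $$b^u_i+\sum_{j\in S}w^S_j\,x^{0,u}_{ij}=b^S_i+\sum_{j\in N^{\{0,1\}}\setminus S}w^S_j\,x^{1,u}_{ij}.$$
   Context: Restless bandit: finite state space $N=N^{\{0,1\}}\cup N^{\{1\}}$ (disjoint); actions $a\in\{0,1\}$; transition probabilities $p^a_{ij}$ with $p^1_{ij}=p^0_{ij}$ for $i\in N^{\{1\}}$; discount factor $\beta\in(0,1)$; activity weights $\theta^1_j>0$. Stationary policies $u:N\to[0,1]$ (probability of the active action) with $u(i)=1$ on $N^{\{1\}}$. With $X(t),a(t)$ state and action at period $t$: $b^u_i=E^u_i[\sum_{t\ge0}\theta^1_{X(t)}a(t)\beta^t]$, $x^{a,u}_{ij}=E^u_i[\sum_{t\ge0}1\{X(t)=j,a(t)=a\}\beta^t]$. For $S\subseteq N^{\{0,1\}}$ the $S$-active policy is active on $S\cup N^{\{1\}}$ and passive elsewhere; $b^S_i$ its activity measure. Marginal workloads: $w^S_i=\theta^1_i1\{i\in N^{\{0,1\}}\}+\beta\sum_{j\in N}(p^1_{ij}-p^0_{ij})b^S_j$. *)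

From HB Require Import structures.
From mathcomp Require Import all_boot all_order all_algebra.
From mathcomp Require Import all_classical all_reals all_analysis.
Set Implicit Arguments. Unset Strict Implicit. Unset Printing Implicit Defensive.
Import Order.TTheory GRing.Theory Num.Theory numFieldNormedType.Exports.
Local Open Scope ring_scope.

Section RB.
Variables (R : realType) (T : finType).

(* Restless bandit data:
   - N1 : {set T} is N^{1}; N^{0,1} is its complement ~: N1;
   - p a i j : transition probability p^a_{ij} (a = true is active, 1);
   - beta : discount factor; theta j : activity weight theta^1_j. *)

Definition dsum (f : nat -> R) : R := limn (series f).

(* One-step transition matrix of the state process under the stationary
   randomized policy u (u i = probability of choosing the active action). *)
Definition polP (p : bool -> T -> T -> R) (u : T -> R) (i j : T) : R :=
  u i * p true i j + (1 - u i) * p false i j.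

Fixpoint polPt (p : bool -> T -> T -> R) (u : T -> R) (t : nat) (i j : T) : R :=
  match t with
  | 0 => (i == j)%:R
  | t'.+1 => \sum_(k : T) polPt p u t' i k * polP p u k j
  end.

Definition actprob (u : T -> R) (a : bool) (j : T) : R :=
  if a then u j else 1 - u j.

(* x^{a,u}_{ij} = E^u_i [ sum_t 1{X(t)=j, a(t)=a} beta^t ]
               = sum_t beta^t P^u_i{X(t)=j, a(t)=a}. *)
Definition occ (p : bool -> T -> T -> R) (beta : R) (u : T -> R)
  (a : bool) (i j : T) : R :=
  dsum (fun t => beta ^+ t * (polPt p u t i j * actprob u a j)).

(* b^u_i = E^u_i [ sum_t theta^1_{X(t)} a(t) beta^t ]
         = sum_t beta^t sum_j theta_j P^u_i{X(t)=j, a(t)=1}. *)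
Definition actmeas (p : bool -> T -> T -> R) (beta : R) (theta : T -> R)
  (u : T -> R) (i : T) : R :=
  dsum (fun t => beta ^+ t * \sum_(j : T) theta j * (polPt p u t i j * u j)).

Definition Sactive (N1 S : {set T}) : T -> R :=
  fun j => if (j \in S) || (j \in N1) then 1 else 0.

Definition bS (p : bool -> T -> T -> R) (beta : R) (theta : T -> R)
  (N1 S : {set T}) (i : T) : R :=
  actmeas p beta theta (Sactive N1 S) i.

Definition workload (p : bool -> T -> T -> R) (beta : R) (theta : T -> R)
  (N1 S : {set T}) (i : T) : R :=
  (if i \in N1 then 0 else theta i)
  + beta * \sum_(j : T) (p true i j - p false i j) * bS p beta theta N1 S j.

End RB.

From HB Require Import structures.
From mathcomp Require Import all_boot all_order all_algebra.
From mathcomp Require Import all_classical all_reals all_analysis.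
From mathcomp Require Import ring lra.
Set Implicit Arguments. Unset Strict Implicit. Unset Printing Implicit Defensive.
Import Order.TTheory GRing.Theory Num.Theory numFieldNormedType.Exports.
Local Open Scope ring_scope.
Local Open Scope classical_set_scope.

(* Let b = b^S and Q(a, j) = theta_j [a = 1] + beta sum_k p^a_jk b_k, the value of
   taking action a once in j and following the S-active policy afterwards.  By the
   Bellman equation of that policy, b_j = Q(1, j) on S and N^{1}, b_j = Q(0, j)
   elsewhere, and w^S_j = Q(1, j) - Q(0, j) on N^{0,1}.  Hence the one-step
   deviation theta_j u_j + beta sum_k p^u_jk b_k - b_j of u from the S-active
   policy is -w^S_j (1 - u_j) on S, w^S_j u_j on N^{0,1} \ S and 0 on N^{1}.
   Summed along the u-chain with discount beta^t these deviations telescope to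
   b^u_i - b^S_i, and by linearity the same sum is
   sum_{N^{0,1} \ S} w^S_j x^{1,u}_ij - sum_S w^S_j x^{0,u}_ij. *)

Lemma cvg_sum (R : numFieldType) (I : finType) (P : pred I)
    (F : I -> nat -> R) (L : I -> R) :
  (forall j, F j n @[n --> \oo] --> L j) ->
  \sum_(j | P j) F j n @[n --> \oo] --> \sum_(j | P j) L j.
Proof. by move=> FL; apply: cvg_big => //; exact: add_continuous. Qed.

Section DiscountedSums.
Variables (R : realType) (beta : R).
Hypothesis beta_lt1 : `|beta| < 1.

Lemma is_cvg_discounted (h : nat -> R) (M : R) :
  (forall t, `|h t| <= M) -> cvgn (series (fun t => beta ^+ t * h t)).
Proof.
move=> hM; have M_ge0 : 0 <= M by apply: le_trans (hM 0%N).
apply: normed_cvg; apply: (@series_le_cvg _ _ (geometric M `|beta|)) => [t|t|t|].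
- exact: normr_ge0.
- by rewrite /geometric /= mulr_ge0 ?exprn_ge0.
- by rewrite /geometric /= normrM normrX mulrC ler_wpM2r ?exprn_ge0.
- by apply: is_cvg_geometric_series; rewrite normr_id.
Qed.

Lemma cvg_dsum_discounted (h : nat -> R) (M : R) :
  (forall t, `|h t| <= M) ->
  series (fun t => beta ^+ t * h t) @ \oo --> dsum (fun t => beta ^+ t * h t).
Proof. exact: is_cvg_discounted. Qed.

Lemma discounted_cvg0 (h : nat -> R) (M : R) :
  (forall t, `|h t| <= M) -> beta ^+ t * h t @[t --> \oo] --> 0.
Proof. by move/is_cvg_discounted/cvg_series_cvg_0. Qed.

End DiscountedSums.

Section PolicyChain.
Variables (R : realType) (T : finType) (p : bool -> T -> T -> R) (beta : R).
Variable v : T -> R.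
Hypothesis p_ge0 : forall a i j, 0 <= p a i j.
Hypothesis p_sum1 : forall a i, \sum_j p a i j = 1.
Hypothesis v_ge0 : forall i, 0 <= v i.
Hypothesis v_le1 : forall i, v i <= 1.

Lemma polP_ge0 i j : 0 <= polP p v i j.
Proof. by rewrite addr_ge0 // mulr_ge0 // subr_ge0. Qed.

Lemma polP_sum1 i : \sum_j polP p v i j = 1.
Proof. by rewrite big_split /= -!mulr_sumr !p_sum1 !mulr1 addrC subrK. Qed.

Lemma sum_polPt0 (f : T -> R) i : \sum_j polPt p v 0 i j * f j = f i.
Proof.
rewrite (bigD1 i) //= eqxx mul1r big1 ?addr0 // => j /negbTE.
by rewrite eq_sym => ->; rewrite mul0r.
Qed.

Lemma polPtSr_sum (f : T -> R) t i :
  \sum_k polPt p v t.+1 i k * f k =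
  \sum_j polPt p v t i j * \sum_k polP p v j k * f k.
Proof.
under eq_bigr do rewrite /= mulr_suml.
rewrite exchange_big /=; apply: eq_bigr => j _.
by rewrite mulr_sumr; apply: eq_bigr => k _; rewrite mulrA.
Qed.

Lemma polPtS_sum (f : T -> R) t i :
  \sum_k polPt p v t.+1 i k * f k =
  \sum_j polP p v i j * \sum_k polPt p v t j k * f k.
Proof.
elim: t i f => [|t IH] i f; rewrite polPtSr_sum.
  by rewrite sum_polPt0; apply: eq_bigr => j _; rewrite sum_polPt0.
by rewrite IH; apply: eq_bigr => j _; rewrite polPtSr_sum.
Qed.

Lemma polPt_ge0 t i j : 0 <= polPt p v t i j.
Proof.
elim: t i j => [|t IH] i j /=; first by case: (i == j).
by apply: sumr_ge0 => k _; rewrite mulr_ge0 // polP_ge0.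
Qed.

Lemma polPt_sum1 t i : \sum_j polPt p v t i j = 1.
Proof.
under eq_bigr do rewrite -[polPt _ _ _ _ _]mulr1.
elim: t i => [|t IH] i; first exact: sum_polPt0.
by rewrite polPtS_sum; under eq_bigr do rewrite IH mulr1; exact: polP_sum1.
Qed.

Lemma polPt_le1 t i j : polPt p v t i j <= 1.
Proof.
rewrite -(polPt_sum1 t i) (bigD1 j) //= lerDl.
by apply: sumr_ge0 => k _; exact: polPt_ge0.
Qed.

Lemma norm_sum_polPt (f : T -> R) t i :
  `|\sum_j polPt p v t i j * f j| <= \sum_j `|f j|.
Proof.
apply: le_trans (ler_norm_sum _ _ _) _; apply: ler_sum => j _.
by rewrite normrM ger0_norm ?polPt_ge0 // ler_piMl ?polPt_le1.
Qed.

Hypothesis beta_lt1 : `|beta| < 1.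

Definition discounted_value (r : T -> R) (i : T) : R :=
  dsum (fun t => beta ^+ t * \sum_j polPt p v t i j * r j).

Lemma cvg_discounted_value r i :
  series (fun t => beta ^+ t * \sum_j polPt p v t i j * r j) @ \oo -->
  discounted_value r i.
Proof. exact: (cvg_dsum_discounted beta_lt1 (fun t => norm_sum_polPt r t i)). Qed.

Lemma actmeas_value theta i :
  actmeas p beta theta v i = discounted_value (fun j => theta j * v j) i.
Proof.
congr dsum; apply/funext => t; congr (_ * _).
by apply: eq_bigr => j _; rewrite mulrCA mulrA.
Qed.

Lemma discounted_value_bellman r i :
  discounted_value r i =
  r i + beta * \sum_j polP p v i j * discounted_value r j.
Proof.
pose f k t := beta ^+ t * \sum_j polPt p v t k j * r j.
have seriesS n :
    series (f i) n.+1 = r i + beta * \sum_j polP p v i j * series (f j) n.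
  rewrite /series /= big_nat_recl // /f expr0 mul1r sum_polPt0; congr (_ + _).
  under eq_bigr do rewrite polPtS_sum exprS.
  under [X in _ = beta * X]eq_bigr do rewrite mulr_sumr.
  rewrite exchange_big mulr_sumr /=; apply: eq_bigr => t _.
  by rewrite -mulrA mulr_sumr; congr (_ * _); apply: eq_bigr => j _; ring.
have shifted : (fun n => series (f i) n.+1) @ \oo --> discounted_value r i.
  by rewrite (cvg_shiftS (series (f i))); exact: cvg_discounted_value.
have limit : (fun n => series (f i) n.+1) @ \oo -->
    r i + beta * \sum_j polP p v i j * discounted_value r j.
  under eq_cvg do rewrite seriesS.
  apply: cvgD; first exact: cvg_cst.
  apply: cvgMl_tmp; apply: cvg_sum => j.
  by apply: cvgMl_tmp; exact: cvg_discounted_value.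
exact: cvg_unique shifted limit.
Qed.

Lemma discounted_value_gap r V i :
  discounted_value (fun j => r j + beta * \sum_k polP p v j k * V k - V j) i =
  discounted_value r i - V i.
Proof.
pose E t := beta ^+ t * \sum_k polPt p v t i k * V k.
have step t : beta ^+ t * \sum_j polPt p v t i j *
      (r j + beta * \sum_k polP p v j k * V k - V j) =
    beta ^+ t * \sum_j polPt p v t i j * r j + (E t.+1 - E t).
  rewrite /E polPtSr_sum exprS.
  under eq_bigr do rewrite mulrBr mulrDr mulrCA.
  rewrite sumrB big_split /= -mulr_sumr.
  ring.
have telescoping n :
    series (fun t => beta ^+ t * \sum_j polPt p v t i j *
      (r j + beta * \sum_k polP p v j k * V k - V j)) n =
    series (fun t => beta ^+ t * \sum_j polPt p v t i j * r j) n + (E n - V i).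
  rewrite /series /=; under eq_bigr do rewrite step.
  by rewrite big_split /= telescope_sumr // /E expr0 mul1r sum_polPt0.
rewrite -[V i]add0r opprD oppr0; apply: cvg_lim => //.
under eq_cvg do rewrite telescoping.
apply: cvgD; first exact: cvg_discounted_value.
apply: cvgB; last exact: cvg_cst.
exact: (discounted_cvg0 beta_lt1 (fun t => norm_sum_polPt V t i)).
Qed.

Lemma discounted_valueB r1 r2 i :
  discounted_value (fun j => r1 j - r2 j) i =
  discounted_value r1 i - discounted_value r2 i.
Proof.
apply: cvg_lim => //.
have seriesB n :
    series (fun t => beta ^+ t * \sum_j polPt p v t i j * (r1 j - r2 j)) n =
    series (fun t => beta ^+ t * \sum_j polPt p v t i j * r1 j) n -
    series (fun t => beta ^+ t * \sum_j polPt p v t i j * r2 j) n.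
  rewrite /series /= -sumrB; apply: eq_bigr => t _.
  by rewrite -mulrBr -sumrB; under eq_bigr do rewrite mulrBr.
under eq_cvg do rewrite seriesB.
by apply: cvgB; exact: cvg_discounted_value.
Qed.

Lemma cvg_occ a i j :
  series (fun t => beta ^+ t * (polPt p v t i j * actprob v a j)) @ \oo -->
  occ p beta v a i j.
Proof.
apply: (cvg_dsum_discounted beta_lt1 (M := `|actprob v a j|)) => t.
by rewrite normrM ger0_norm ?polPt_ge0 // ler_piMl ?polPt_le1.
Qed.

Lemma discounted_value_occ a (A : {set T}) (c : T -> R) i :
  discounted_value (fun j => if j \in A then c j * actprob v a j else 0) i =
  \sum_(j in A) c j * occ p beta v a i j.
Proof.
apply: cvg_lim => //.
have series_occ n :
    series (fun t => beta ^+ t * \sum_j polPt p v t i j *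
      (if j \in A then c j * actprob v a j else 0)) n =
    \sum_(j in A) c j *
      series (fun t => beta ^+ t * (polPt p v t i j * actprob v a j)) n.
  rewrite /series /=; under [RHS]eq_bigr do rewrite mulr_sumr.
  rewrite exchange_big /=; apply: eq_bigr => t _.
  rewrite [RHS]big_mkcond mulr_sumr /=; apply: eq_bigr => j _.
  by case: ifP => _; rewrite ?mulr0 //; ring.
under eq_cvg do rewrite series_occ.
by apply: cvg_sum => j; apply: cvgMl_tmp; exact: cvg_occ.
Qed.

End PolicyChain.

Section ActionValue.
Variables (R : realType) (T : finType) (p : bool -> T -> T -> R) (beta : R).
Variable theta : T -> R.

Definition action_value (V : T -> R) (a : bool) (j : T) : R :=
  (if a then theta j else 0) + beta * \sum_k p a j k * V k.

Lemma polP_action_value (v V : T -> R) j :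
  theta j * v j + beta * \sum_k polP p v j k * V k =
  v j * action_value V true j + (1 - v j) * action_value V false j.
Proof.
rewrite /action_value /polP; under eq_bigr do rewrite mulrDl -!mulrA.
by rewrite big_split -!mulr_sumr /=; ring.
Qed.

End ActionValue.

Section SActivePolicy.
Variables (R : realType) (T : finType) (N1 S : {set T}).
Variables (p : bool -> T -> T -> R) (beta : R) (theta : T -> R).
Hypothesis p_ge0 : forall a i j, 0 <= p a i j.
Hypothesis p_sum1 : forall a i, \sum_j p a i j = 1.
Hypothesis beta_lt1 : `|beta| < 1.
Hypothesis S_N01 : S \subset ~: N1.

Let b := bS p beta theta N1 S.
Let w := workload p beta theta N1 S.
Let Q := action_value p beta theta b.

Lemma bS_action_value j : b j = Q ((j \in S) || (j \in N1)) j.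
Proof.
have s_ge0 k : 0 <= Sactive R N1 S k by rewrite /Sactive; case: ifP.
have s_le1 k : Sactive R N1 S k <= 1 by rewrite /Sactive; case: ifP.
rewrite {1}/b /bS actmeas_value discounted_value_bellman //.
under eq_bigr do rewrite -actmeas_value.
rewrite polP_action_value /Sactive.
by case: ifP => _; rewrite ?subrr ?subr0 ?mul0r ?mul1r ?addr0 ?add0r.
Qed.

Lemma workload_action_value j : j \notin N1 -> w j = Q true j - Q false j.
Proof.
move=> /negbTE jN1; rewrite /w /workload jN1 /Q /action_value -/b.
by under eq_bigr do rewrite mulrBl; rewrite sumrB; ring.
Qed.

Lemma bS_deviation (u : T -> R) : (forall i, i \in N1 -> u i = 1) ->
  (fun j => theta j * u j + beta * \sum_k polP p u j k * b k - b j) =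
  (fun j => (if j \in ~: N1 :\: S then w j * actprob u true j else 0) -
            (if j \in S then w j * actprob u false j else 0)).
Proof.
move=> u_N1; apply/funext => j; rewrite polP_action_value bS_action_value !inE.
have [jS|jNS] /= := boolP (j \in S).
  have jN01 : j \notin N1 by have := fintype.subsetP S_N01 j jS; rewrite inE.
  by rewrite workload_action_value // /Q; ring.
have [jN1|jN01] /= := boolP (j \in N1); first by rewrite u_N1 // /Q; ring.
by rewrite workload_action_value // /Q; ring.
Qed.

End SActivePolicy.

Theorem proposition4 (R : realType) (T : finType) (N1 : {set T})
  (p : bool -> T -> T -> R) (beta : R) (theta : T -> R)
  (p_ge0 : forall a i j, 0 <= p a i j)
  (p_sum1 : forall a i, \sum_(j : T) p a i j = 1)
  (p_N1 : forall i j, i \in N1 -> p true i j = p false i j)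
  (beta_gt0 : 0 < beta) (beta_lt1 : beta < 1)
  (theta_gt0 : forall j, 0 < theta j)
  (u : T -> R) (u_ge0 : forall i, 0 <= u i) (u_le1 : forall i, u i <= 1)
  (u_N1 : forall i, i \in N1 -> u i = 1)
  (S : {set T}) (HS : S \subset ~: N1) (i : T) :
  actmeas p beta theta u i
    + \sum_(j in S) workload p beta theta N1 S j * occ p beta u false i j
  = bS p beta theta N1 S i
    + \sum_(j in ~: N1 :\: S) workload p beta theta N1 S j * occ p beta u true i j.
Proof.
have beta_norm : `|beta| < 1 by rewrite ger0_norm ?ltW.
have := discounted_value_gap p_ge0 p_sum1 u_ge0 u_le1 beta_norm
  (fun j => theta j * u j) (bS p beta theta N1 S) i.
rewrite (bS_deviation theta p_ge0 p_sum1 beta_norm HS u_N1).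
rewrite discounted_valueB // !discounted_value_occ // -actmeas_value.
lra.
Qed.
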